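(* Let $X$ be a noetherian topological space and $A,B\subseteq X$ two closed subspaces neither of which is contained in the other. Then: (1) $c(A\cup B)\le\dim(A\cap B)$; (2) if $A\cap B$ is irreducible then $c(A\cup B)\le c(A)$; (3) if $B$ is irreducible then $c(A\cup B)\ge\min\{c(A),\dim(A\cap B)\}$; (4) if $B$ and $A\cap B$ are irreducible then $c(A\cup B)=\min\{c(A),\dim(A\cap B)\}$.
   Context: For a noetherian topological space $T$, the connectedness dimension is $c(T)=\min\{\dim Z: Z\subseteq T\text{ closed and } T\setminus Z\text{ disconnected}\}$, where $\dim$ is Krull dimension of the topological space. *)

From HB Require Import structures.
From mathcomp Require Import all_boot all_order all_algebra.
From mathcomp Require Import all_classical all_reals all_analysis.
From mathcomp Require Import Rstruct Rstruct_topology.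
Set Implicit Arguments. Unset Strict Implicit. Unset Printing Implicit Defensive.
Import Order.TTheory GRing.Theory Num.Theory.
Local Open Scope classical_set_scope.
Local Open Scope ring_scope.

Section Defs.
Variable X : topologicalType.

Definition noetherian_space : Prop :=
  forall F : nat -> set X, (forall n, closed (F n)) ->
    (forall n, F n.+1 `<=` F n) ->
    exists N, forall n, (N <= n)%N -> F n = F N.

Definition rel_closed (S Z : set X) : Prop :=
  exists2 C, closed C & Z = S `&` C.

Definition irreducible (S : set X) : Prop :=
  S !=set0 /\
  forall C1 C2 : set X, closed C1 -> closed C2 ->
    S `<=` C1 `|` C2 -> S `<=` C1 \/ S `<=` C2.

(* Convention (Brodmann--Sharp):
   the empty space is disconnected.  'connected' is the library notion
   of connectedness of a subset (w.r.t. the subspace topology). *)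
Definition disconnected (S : set X) : Prop :=
  S = set0 \/ ~ connected S.

Definition irr_chain (S : set X) (n : nat) : Prop :=
  exists Z : nat -> set X,
    (forall i, (i <= n)%N -> rel_closed S (Z i) /\ irreducible (Z i)) /\
    (forall i, (i < n)%N -> Z i `<` Z i.+1).

Definition kdim (S : set X) : \bar Rdefinitions.R :=
  ereal_sup ([set (-1)%:E] `|` [set (n%:R)%:E | n in irr_chain S]).

Definition conn_dim (T : set X) : \bar Rdefinitions.R :=
  ereal_inf [set kdim Z | Z in [set Z | rel_closed T Z /\ disconnected (T `\` Z)]].

End Defs.

From HB Require Import structures.
From mathcomp Require Import all_boot all_order all_algebra.
From mathcomp Require Import all_classical all_reals all_analysis.
From mathcomp Require Import Rstruct Rstruct_topology.
Import Order.TTheory GRing.Theory Num.Theory.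
Local Open Scope classical_set_scope.
Local Open Scope ereal_scope.
Set Implicit Arguments.
Unset Strict Implicit.

(* Disconnecting T \ Z means separating it by two closed sets.  Taking
   Z = A `&` B, the sets A and B separate (A `|` B) \ Z.  A separation of
   A \ Z extends to (A `|` B) \ Z by adding B to the side containing
   (A \ Z) `&` B, and a separation of (A `|` B) \ Z restricts to A \ Z once
   A meets both sides.  Irreducibility of A `&` B, resp. of B, puts that set
   inside Z or inside a single side, which is exactly what each transfer
   needs. *)

Section ClosedSeparation.
Variable X : topologicalType.
Implicit Types S T A B Z : set X.

Definition closed_separation S (D1 D2 : set X) : Prop :=
  [/\ closed D1, closed D2, S `<=` D1 `|` D2, S `&` D1 `&` D2 = set0
    & S `&` D1 !=set0 /\ S `&` D2 !=set0].

Lemma closed_separationC S D1 D2 :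
  closed_separation S D1 D2 -> closed_separation S D2 D1.
Proof.
case=> cD1 cD2 SD SD0 [SD1 SD2]; split=> //; first by rewrite setUC.
by rewrite setIAC.
Qed.

Lemma not_connectedP S :
  ~ connected S <-> exists D1 D2, closed_separation S D1 D2.
Proof.
rewrite connectedPn; split=> [[E [E0 SE [sep01 sep10]]]|[D1 [D2 sep]]].
  exists (closure (E false)), (closure (E true)); split.
  - exact: closed_closure.
  - exact: closed_closure.
  - by rewrite SE; apply: setUSS; apply: subset_closure.
  - apply/seteqP; split=> // x [[Sx cl0x] cl1x].
    move: Sx; rewrite SE => -[E0x|E1x].
      by rewrite -sep10; split.
    by rewrite -sep01; split.
  - split.
      have [x E0x] := E0 false; exists x; split; last by apply: subset_closure.
      by rewrite SE; left.
    have [x E1x] := E0 true; exists x; split; last by apply: subset_closure.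
    by rewrite SE; right.
case: sep => cD1 cD2 SD SD0 [SD1 SD2].
have closure_SD D : closed D -> closure (S `&` D) `<=` D.
  by move=> /closure_id {2}->; apply: closureS; exact: subIsetr.
exists (fun b => S `&` if b then D2 else D1); split.
- by case.
- apply/seteqP; split=> [x Sx|x [] []//].
  by case: (SD x Sx) => Dx; [left|right].
- split; apply/seteqP; split=> // x [].
    by move=> /(closure_SD _ cD1) D1x [Sx D2x]; rewrite -SD0.
  by move=> [Sx D1x] /(closure_SD _ cD2) D2x; rewrite -SD0.
Qed.

Lemma separation_disconnected S D1 D2 :
  closed_separation S D1 D2 -> disconnected S.
Proof. by move=> sep; right; apply/not_connectedP; exists D1, D2. Qed.

Lemma closed_separation_sub S T D1 D2 : T `<=` S ->
  T `&` D1 !=set0 -> T `&` D2 !=set0 ->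
  closed_separation S D1 D2 -> closed_separation T D1 D2.
Proof.
move=> TS TD1 TD2 [cD1 cD2 SD SD0 _]; split=> //.
  by move=> x /TS /SD.
by apply/seteqP; split=> // x [[/TS Sx D1x] D2x]; rewrite -SD0.
Qed.

Lemma closed_separation_setU A B Z D1 D2 : closed A -> closed B ->
  (A `\` Z) `&` B `<=` D1 -> closed_separation (A `\` Z) D1 D2 ->
  closed_separation ((A `|` B) `\` Z) (D1 `|` B) (A `&` D2).
Proof.
move=> cA cB AZB [cD1 cD2 SD SD0 [[a [[Aa nZa] D1a]] [b [[Ab nZb] D2b]]]].
split.
- exact: closedU.
- exact: closedI.
- move=> x [[Ax|Bx] nZx]; last by left; right.
  by case: (SD x (conj Ax nZx)) => Dx; [left; left|right].
- apply/seteqP; split=> // x [[[_ nZx] D1Bx] [Ax D2x]].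
  rewrite -SD0; split=> //; split=> //.
  by case: D1Bx => // Bx; exact: AZB.
- split; first by exists a; split; [split=> //; left|left].
  by exists b; split; [split=> //; left|].
Qed.

Lemma irreducible_sub_separation S T Z D1 D2 : irreducible S -> closed Z ->
  S `<=` T -> closed_separation (T `\` Z) D1 D2 ->
  [\/ S `<=` Z, S `<=` D1 | S `<=` D2].
Proof.
move=> [_ irrS] cZ ST [cD1 cD2 SD _ _].
have [SZ|SD12] : S `<=` Z \/ S `<=` D1 `|` D2.
- apply: irrS => //; first exact: closedU.
  move=> x Sx; have [Zx|nZx] := pselect (Z x); first by left.
  by right; apply: SD; split=> //; exact: ST.
- by constructor 1.
by have [] := irrS _ _ cD1 cD2 SD12; [constructor 2|constructor 3].
Qed.

End ClosedSeparation.

Section Dimension.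
Variable X : topologicalType.
Implicit Types S T A B Z : set X.

Lemma rel_closed_closed T Z : closed T -> rel_closed T Z -> closed Z.
Proof. by move=> cT [C cC ->]; exact: closedI. Qed.

Lemma closed_rel_closed T Z : closed Z -> Z `<=` T -> rel_closed T Z.
Proof. by move=> cZ ZT; exists Z => //; rewrite setIidr. Qed.

Lemma irr_chainS S T n :
  closed S -> S `<=` T -> irr_chain S n -> irr_chain T n.
Proof.
move=> cS ST [Z [ZS Zlt]]; exists Z; split=> // i ilen.
have [[C cC ->] irrZ] := ZS i ilen; split=> //.
apply: closed_rel_closed; first exact: closedI.
exact: subset_trans (@subIsetl _ S C) ST.
Qed.

Lemma kdimS S T : closed S -> S `<=` T -> kdim S <= kdim T.
Proof.
move=> cS ST; apply/ereal_sup_le/setUS => _ [n Sn <-].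
by exists n => //; exact: irr_chainS Sn.
Qed.

Lemma conn_dim_le_kdim T Z :
  rel_closed T Z -> disconnected (T `\` Z) -> conn_dim T <= kdim Z.
Proof. by move=> TZ dZ; apply: ereal_inf_lbound; exists Z. Qed.

Lemma lb_conn_dim T x :
  (forall Z, rel_closed T Z -> disconnected (T `\` Z) -> x <= kdim Z) ->
  x <= conn_dim T.
Proof.
by move=> lbx; apply: le_ereal_inf_tmp => _ [Z [TZ dZ] <-]; exact: lbx.
Qed.

Lemma conn_dim_setU_le_kdim_setI A B : closed A -> closed B ->
  ~ A `<=` B -> ~ B `<=` A -> conn_dim (A `|` B) <= kdim (A `&` B).
Proof.
move=> cA cB nAB nBA; apply: conn_dim_le_kdim.
  by apply: closed_rel_closed; [exact: closedI|move=> x [Ax _]; left].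
apply: (@separation_disconnected _ _ A B); split=> //.
  by apply/seteqP; split=> // x [[[_ nABx] Ax] Bx]; apply: nABx.
have /existsNP[a /not_implyP[Aa nBa]] := nAB.
have /existsNP[b /not_implyP[Bb nAb]] := nBA.
split.
  by exists a; split=> //; split; [left|move=> [_ /nBa]].
by exists b; split=> //; split; [right|move=> [/nAb]].
Qed.

Lemma conn_dim_setU_le_of_separation A B Z (D1 D2 : set X) :
  closed A -> closed B -> closed Z -> Z `<=` A -> (A `\` Z) `&` B `<=` D1 ->
  closed_separation (A `\` Z) D1 D2 -> conn_dim (A `|` B) <= kdim Z.
Proof.
move=> cA cB cZ ZA AZB sep; apply: conn_dim_le_kdim.
  by apply: closed_rel_closed => // x /ZA; left.
exact/separation_disconnected/(closed_separation_setU cA cB AZB sep).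
Qed.

Lemma conn_dim_setU_le_conn_dim A B : closed A -> closed B ->
  ~ A `<=` B -> ~ B `<=` A -> irreducible (A `&` B) ->
  conn_dim (A `|` B) <= conn_dim A.
Proof.
move=> cA cB nAB nBA irrAB; apply: lb_conn_dim => Z AZ dZ.
have cZ := rel_closed_closed cA AZ.
have ZA : Z `<=` A by case: AZ => C _ ->; exact: subIsetl.
case: dZ => [|/not_connectedP[D1 [D2 sep]]].
  rewrite setD_eq0 => AsubZ.
  apply: le_trans (conn_dim_setU_le_kdim_setI cA cB nAB nBA) _.
  by apply: kdimS; [exact: closedI|move=> x [/AsubZ]].
have [ABZ|ABD1|ABD2] :=
  irreducible_sub_separation irrAB cZ (@subIsetl _ A B) sep.
- apply: (conn_dim_setU_le_of_separation cA cB cZ ZA _ sep).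
  by move=> x [[Ax nZx] Bx]; case: nZx; apply: ABZ.
- apply: (conn_dim_setU_le_of_separation cA cB cZ ZA _ sep).
  by move=> x [[Ax _] Bx]; apply: ABD1.
- move/closed_separationC: sep => sep.
  apply: (conn_dim_setU_le_of_separation cA cB cZ ZA _ sep).
  by move=> x [[Ax _] Bx]; apply: ABD2.
Qed.

Lemma conn_dim_or_kdim_setI_le A B Z (D1 D2 : set X) :
  closed A -> closed B -> closed Z -> B `<=` D1 ->
  closed_separation ((A `|` B) `\` Z) D1 D2 ->
  conn_dim A <= kdim Z \/ kdim (A `&` B) <= kdim Z.
Proof.
move=> cA cB cZ BD1 sep.
have [AZD1|AZD10] := pselect ((A `\` Z) `&` D1 !=set0); [left|right].
  apply: le_trans (kdimS (closedI cA cZ) (@subIsetr _ A Z)).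
  apply: conn_dim_le_kdim; first by exists Z.
  have AZD2 : (A `\` Z) `&` D2 !=set0.
    case: (sep) => _ _ _ SD0 [_ [b [[ABb nZb] D2b]]].
    exists b; split=> //; split=> //; case: ABb => // Bb.
    suff : (((A `|` B) `\` Z) `&` D1 `&` D2) b by rewrite SD0.
    by split=> //; split; [split=> //; right|exact: BD1].
  rewrite setDIr setDv set0U; apply: separation_disconnected.
  by apply: closed_separation_sub sep => // x [Ax nZx]; split=> //; left.
apply: kdimS; first exact: closedI.
move=> x [Ax Bx]; apply: contrapT => nZx.
by apply: AZD10; exists x; split; [split|exact: BD1].
Qed.

Lemma le_conn_dim_setU A B : closed A -> closed B -> irreducible B ->
  Order.min (conn_dim A) (kdim (A `&` B)) <= conn_dim (A `|` B).
Proof.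
move=> cA cB irrB; apply: lb_conn_dim => Z ABZ dZ.
have cZ := rel_closed_closed (closedU cA cB) ABZ.
have [BZ|nBZ] := pselect (B `<=` Z).
  rewrite ge_min; apply/orP; right.
  by apply: kdimS; [exact: closedI|move=> x [_ /BZ]].
case: dZ => [|/not_connectedP[D1 [D2 sep]]].
  rewrite setD_eq0 => ABsubZ.
  by exfalso; apply: nBZ => x Bx; apply: ABsubZ; right.
suff [le|le] : conn_dim A <= kdim Z \/ kdim (A `&` B) <= kdim Z.
- by rewrite ge_min le.
- by rewrite ge_min le orbT.
have [//|BD1|BD2] := irreducible_sub_separation irrB cZ (@subsetUr _ A B) sep.
- exact: conn_dim_or_kdim_setI_le cA cB cZ BD1 sep.
- exact: conn_dim_or_kdim_setI_le cA cB cZ BD2 (closed_separationC sep).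
Qed.

End Dimension.

Theorem mainTheorem10 (X : topologicalType) (A B : set X) :
  noetherian_space X -> closed A -> closed B ->
  ~ (A `<=` B) -> ~ (B `<=` A) ->
  [/\ conn_dim (A `|` B) <= kdim (A `&` B),
      irreducible (A `&` B) -> conn_dim (A `|` B) <= conn_dim A,
      irreducible B ->
        Order.min (conn_dim A) (kdim (A `&` B)) <= conn_dim (A `|` B)
    & irreducible B -> irreducible (A `&` B) ->
        conn_dim (A `|` B) = Order.min (conn_dim A) (kdim (A `&` B))].
Proof.
move=> _ cA cB nAB nBA.
have le1 := conn_dim_setU_le_kdim_setI cA cB nAB nBA.
have le2 := conn_dim_setU_le_conn_dim cA cB nAB nBA.
have le3 := le_conn_dim_setU cA cB.
split=> // irrB irrAB.
by apply/eqP; rewrite eq_le le_min le1 (le2 irrAB) (le3 irrB).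
Qed.
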